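(* Let $N\ge 1$, let $x_1,\dots,x_{2N-2}\in\mathbb{C}$ and let $z_1,\dots,z_N\in\mathbb{C}$ be pairwise distinct and distinct from all $x_i$. Then $$\sum_{r=1}^N\Big(\prod_{i=1}^{2N-2}(z_r-x_i)\Big)\Big(\prod_{s=1,\,s\ne r}^N\frac{1}{(z_r-z_s)^2}\Big)\Big[\sum_{i=1}^{2N-2}\frac{1}{z_r-x_i}-\sum_{s=1,\,s\ne r}^N\frac{2}{z_r-z_s}\Big]=0 .$$ *)

From HB Require Import structures.
From mathcomp Require Import all_boot all_order all_algebra.
From mathcomp Require Import complex.
From mathcomp Require Import Rstruct.
Set Implicit Arguments. Unset Strict Implicit. Unset Printing Implicit Defensive.
Import Order.TTheory GRing.Theory Num.Theory.
Local Open Scope ring_scope.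

Definition CC : Type := complex Rdefinitions.R.

From mathcomp Require Import all_boot all_order all_algebra.
From mathcomp Require Import complex.
From mathcomp Require Import Rstruct.
From mathcomp Require Import ring zify.
Set Implicit Arguments.
Unset Strict Implicit.
Unset Printing Implicit Defensive.
Import GRing.Theory.
Local Open Scope ring_scope.

(* With Q = \prod_s (X - z_s) and P = \prod_i (X - x_i), the r-th summand is the residue of
   P / Q^2 at the double pole z_r, i.e. the derivative at z_r of P / q_r^2 where
   q_r = Q / (X - z_r).  Every P of degree < 2N equals its Hermite interpolant
   \sum_r (a_r + b_r (X - z_r)) q_r^2 on the nodes z_r, because the difference has N double
   roots; b_r is that residue, and the coefficient of X^(2N-1) on both sides gives
   \sum_r b_r = 0 as soon as deg P <= 2N - 2. *)

Lemma XsubC_sqr_dvdp (R : idomainType) (p : {poly R}) (w : R) :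
  root p w -> root p^`() w -> ('X - w%:P) ^+ 2 %| p.
Proof.
move=> /factor_theorem [q ->]; rewrite derivE derivXsubC mulr1 rootE !hornerE subrr.
rewrite mulr0 add0r => /factor_theorem [q' ->].
by rewrite -mulrA -expr2 dvdp_mulIr.
Qed.

Lemma prod_XsubC_sqr_dvdp (R : idomainType) (p : {poly R}) (s : seq R) :
  uniq s -> {in s, forall w, root p w && root p^`() w} ->
  (\prod_(w <- s) ('X - w%:P)) ^+ 2 %| p.
Proof.
elim: s => [|w s IHs] /=; first by rewrite big_nil expr1n dvd1p.
case/andP=> ws us roots; rewrite big_cons exprMn Gauss_dvdp.
  have /andP[pw p'w] := roots w (mem_head w s).
  rewrite XsubC_sqr_dvdp //= IHs // => v vs; apply: roots; exact: mem_behead.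
rewrite coprimep_expl // coprimep_expr // coprimep_sym coprimep_XsubC.
by rewrite root_prod_XsubC.
Qed.

Lemma double_roots_poly_eq0 (R : idomainType) (p : {poly R}) (s : seq R) :
  uniq s -> (size p <= (size s).*2)%N ->
  {in s, forall w, root p w && root p^`() w} -> p = 0.
Proof.
move=> us size_p roots; apply/eqP; apply: contraTT size_p => p_neq0.
have /(dvdp_leq p_neq0) := prod_XsubC_sqr_dvdp us roots.
have mon : \prod_(w <- s) ('X - w%:P) \is monic by apply: monic_prod_XsubC.
rewrite expr2 size_monicM ?monic_neq0 // size_prod_XsubC -ltnNge.
by rewrite addSn addnS -addnn.
Qed.

Lemma horner_deriv_prod_XsubC (F : fieldType) (I : Type) (r : seq I) (P : pred I)
    (a : I -> F) (t : F) :
  (forall i, P i -> t != a i) ->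
  (\prod_(i <- r | P i) ('X - (a i)%:P))^`().[t] =
  (\prod_(i <- r | P i) ('X - (a i)%:P)).[t] * \sum_(i <- r | P i) (t - a i)^-1.
Proof.
move=> t_notin; elim: r => [|i r IHr]; first by rewrite !big_nil derivC hornerC mulr0.
rewrite !big_cons; case: ifP => // Pi.
have ta_neq0 : t - a i != 0 by rewrite subr_eq0 t_notin.
rewrite derivM derivXsubC hornerD !hornerM IHr hornerXsubC hornerC.
by field.
Qed.

Lemma horner_deriv_mul_sqr (R : comNzRingType) (A q : {poly R}) (w : R) :
  (A * q ^+ 2)^`().[w] = q.[w] * (A^`().[w] * q.[w] + A.[w] * q^`().[w] *+ 2).
Proof.
rewrite derivM deriv_exp /= expr1.
by rewrite !(hornerD, horner_exp, hornerMn, hornerM); ring.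
Qed.

Lemma size_prod_XsubC_ord (R : nzRingType) (n : nat) (a : 'I_n -> R) :
  size (\prod_(i < n) ('X - (a i)%:P)) = n.+1.
Proof. by rewrite size_prod_XsubC [index_enum _]unlock -enumT size_enum_ord. Qed.

Section HermiteInterpolation.

Variables (F : fieldType) (N : nat) (z : 'I_N -> F).
Hypothesis z_inj : injective z.

Definition cofactor (r : 'I_N) : {poly F} := \prod_(s < N | s != r) ('X - (z s)%:P).

Local Notation c r := (cofactor r).[z r].

Lemma horner_cofactor r : c r = \prod_(s < N | s != r) (z r - z s).
Proof. by rewrite horner_prod; apply: eq_bigr => s _; rewrite hornerXsubC. Qed.

Lemma sub_nodes_neq0 (r s : 'I_N) : s != r -> z r - z s != 0.
Proof. by rewrite subr_eq0 => /eqP sr; apply/eqP => /z_inj/esym. Qed.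

Lemma horner_cofactor_neq0 r : c r != 0.
Proof. by rewrite horner_cofactor; apply/prodf_neq0 => s; apply: sub_nodes_neq0. Qed.

Lemma horner_cofactor_eq0 r j : j != r -> (cofactor r).[z j] = 0.
Proof. by move=> jr; rewrite horner_prod (bigD1 j) //= hornerXsubC subrr mul0r. Qed.

Lemma horner_deriv_cofactor r :
  (cofactor r)^`().[z r] = c r * \sum_(s < N | s != r) (z r - z s)^-1.
Proof. by rewrite horner_deriv_prod_XsubC // => s sr; rewrite -subr_eq0 sub_nodes_neq0. Qed.

Lemma cofactor_monic r : cofactor r \is monic.
Proof. exact: monic_prod_XsubC. Qed.

Lemma size_cofactor r : size (cofactor r) = N.
Proof.
have := size_prod_XsubC_ord z.
rewrite (bigD1 r) //= -/(cofactor r) size_monicM ?monicXsubC ?monic_neq0 ?cofactor_monic //.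
by rewrite size_XsubC => -[].
Qed.

Lemma size_cofactor_sqr r : size (cofactor r ^+ 2) = N.*2.-1.
Proof.
by rewrite expr2 size_monicM ?monic_neq0 ?cofactor_monic // size_cofactor -addnn.
Qed.

(* The value of P / cofactor r ^+ 2 at z r and its derivative there. *)
Definition hermite_val (P : {poly F}) r := P.[z r] / c r ^+ 2.

Definition hermite_slope (P : {poly F}) r :=
  (P^`().[z r] * c r - 2 * P.[z r] * (cofactor r)^`().[z r]) / c r ^+ 3.

Definition hermite_interp (P : {poly F}) : {poly F} :=
  \sum_(r < N)
    ((hermite_val P r)%:P + hermite_slope P r *: ('X - (z r)%:P)) * cofactor r ^+ 2.

Lemma horner_hermite_interp P j : (hermite_interp P).[z j] = P.[z j].
Proof.
rewrite /hermite_interp horner_sum (bigD1 j) //= big1 => [|r rj].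
  rewrite hornerM horner_exp hornerD hornerZ hornerXsubC subrr mulr0 addr0 hornerC.
  by rewrite addr0 /hermite_val divfK // sqrf_eq0 horner_cofactor_neq0.
by rewrite hornerM horner_exp horner_cofactor_eq0 1?eq_sym // expr0n mulr0.
Qed.

Lemma horner_deriv_hermite_interp P j :
  (hermite_interp P)^`().[z j] = P^`().[z j].
Proof.
rewrite /hermite_interp raddf_sum horner_sum (bigD1 j) //= big1 => [|r rj].
  have cj_neq0 := horner_cofactor_neq0 j.
  rewrite horner_deriv_mul_sqr derivD derivC derivZ derivXsubC add0r hornerZ hornerC.
  rewrite hornerD hornerC hornerZ hornerXsubC subrr mulr0 addr0.
  rewrite /hermite_val /hermite_slope.
  by rewrite addr0; field.
by rewrite horner_deriv_mul_sqr horner_cofactor_eq0 1?eq_sym // mul0r.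
Qed.

Lemma size_hermite_interp (P : {poly F}) : (size (hermite_interp P) <= N.*2)%N.
Proof.
apply: leq_trans (size_sum _ _ _) _; apply/bigmax_leqP => r _.
apply: leq_trans (size_polyMleq _ _) _; rewrite size_cofactor_sqr.
have size_lin :
    (size ((hermite_val P r)%:P + hermite_slope P r *: ('X - (z r)%:P))%R <= 2)%N.
  apply: leq_trans (size_polyD _ _) _; rewrite geq_max size_polyC.
  by rewrite (leq_trans (size_scale_leq _ _)) ?size_XsubC // andbT; case: eqP.
have := ltn_ord r; lia.
Qed.

Lemma hermite_interpE (P : {poly F}) : (size P <= N.*2)%N -> hermite_interp P = P.
Proof.
move=> size_P; apply/eqP; rewrite -subr_eq0; apply/eqP.
apply: (@double_roots_poly_eq0 _ _ (codom z)).
- by rewrite map_inj_uniq ?enum_uniq.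
- rewrite size_codom card_ord; apply: leq_trans (size_polyD _ _) _.
  by rewrite size_polyN geq_max size_hermite_interp.
- move=> _ /codomP [j ->]; rewrite derivB !rootE !hornerD !hornerN.
  by rewrite horner_hermite_interp horner_deriv_hermite_interp !subrr eqxx.
Qed.

Lemma coef_hermite_interp (P : {poly F}) :
  (hermite_interp P)`_(N.*2.-1) = \sum_(r < N) hermite_slope P r.
Proof.
rewrite coef_sum; apply: eq_bigr => r _.
rewrite mulrDl mul_polyC -scalerAl coefD !coefZ nth_default ?size_cofactor_sqr //.
have monic_term : ('X - (z r)%:P) * cofactor r ^+ 2 \is monic.
  by rewrite monicMl ?monicXsubC // monic_exp // cofactor_monic.
have size_term : size (('X - (z r)%:P) * cofactor r ^+ 2) = N.*2.
  rewrite size_monicM ?monicXsubC ?monic_neq0 ?monic_exp ?cofactor_monic //.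
  rewrite size_XsubC size_cofactor_sqr.
  have N_gt0 : (0 < N)%N := leq_ltn_trans (leq0n r) (ltn_ord r).
  by rewrite -(prednK N_gt0) doubleS /= add0n add1n.
rewrite mulr0 add0r.
have -> : N.*2.-1 = (size (('X - (z r)%:P) * cofactor r ^+ 2)).-1 by rewrite size_term.
by rewrite -lead_coefE (monicP monic_term) mulr1.
Qed.

Lemma sum_hermite_slope_eq0 (P : {poly F}) :
  (size P < N.*2)%N -> \sum_(r < N) hermite_slope P r = 0.
Proof.
move=> size_P; rewrite -coef_hermite_interp hermite_interpE; last exact: ltnW.
have N2_gt0 : (0 < N.*2)%N := leq_ltn_trans (leq0n _) size_P.
by rewrite nth_default // -ltnS prednK.
Qed.

Lemma hermite_slope_logder (P : {poly F}) r (l : F) :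
  P^`().[z r] = P.[z r] * l ->
  hermite_slope P r =
    P.[z r] / c r ^+ 2 * (l - 2 * \sum_(s < N | s != r) (z r - z s)^-1).
Proof.
move=> P'_eq; have cr_neq0 := horner_cofactor_neq0 r.
by rewrite /hermite_slope P'_eq horner_deriv_cofactor; field.
Qed.

End HermiteInterpolation.

Theorem mainTheorem3 (N : nat) (x : 'I_(2 * N - 2) -> CC) (z : 'I_N -> CC) :
  (1 <= N)%N ->
  injective z ->
  (forall r i, z r != x i) ->
  \sum_(r < N)
     (\prod_(i < 2 * N - 2) (z r - x i)) *
     (\prod_(s < N | s != r) ((z r - z s) ^+ 2)^-1) *
     (\sum_(i < 2 * N - 2) (z r - x i)^-1 -
      \sum_(s < N | s != r) 2 / (z r - z s)) = 0.
Proof.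
move=> N_gt0 z_inj z_neq_x.
pose P := \prod_(i < 2 * N - 2) ('X - (x i)%:P).
have size_P : (size P < N.*2)%N.
  by rewrite size_prod_XsubC_ord -mul2n; clear -N_gt0; lia.
rewrite -[RHS](sum_hermite_slope_eq0 z_inj size_P); apply: eq_bigr => r _.
have P_at_z : P.[z r] = \prod_(i < 2 * N - 2) (z r - x i).
  by rewrite horner_prod; apply: eq_bigr => i _; rewrite hornerXsubC.
rewrite (hermite_slope_logder z_inj (l := \sum_(i < 2 * N - 2) (z r - x i)^-1));
  last by apply: horner_deriv_prod_XsubC => i _; apply: z_neq_x.
by rewrite P_at_z horner_cofactor prodfV prodrXl mulr_sumr.
Qed.
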